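(* Let $S$ be a semigroup and let $a\in S$ be an idempotent such that $aSa\subseteq\operatorname{Reg}(S)$. Let $P=\{x\in Sa: x\,\mathscr L\,ax\}$, and let $\phi:P\to aSa$, $x\mapsto ax$. Then $\phi$ is a surjective homomorphism, and (i) $E(Sa)=E(aSa)\phi^{-1}$; (ii) $\mathbb E(Sa)=\mathbb E(aSa)\phi^{-1}$.
   Context: $Sa=\{xa:x\in S\}$ and $aSa=\{axa:x\in S\}$ (a monoid with identity $a$). $\operatorname{Reg}(S)$ is the set of regular elements of $S$. $\mathscr L$ is Green's $\mathscr L$-relation on $S$. For a semigroup $T$, $E(T)$ is its set of idempotents and $\mathbb E(T)=\langle E(T)\rangle$ is the subsemigroup generated by its idempotents. $\phi^{-1}$ denotes preimage. *)

Set Implicit Arguments.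

Section SemigroupDefs.
Variable S : Type.
Variable mul : S -> S -> S.

Definition regular (x : S) : Prop := exists y, mul (mul x y) x = x.

Definition idempotent (e : S) : Prop := mul e e = e.

(* Green's L-relation: S^1 x = S^1 y *)
Definition greenL (x y : S) : Prop :=
  (x = y \/ exists s, x = mul s y) /\ (y = x \/ exists t, y = mul t x).

Definition rightIdeal_Sa (a : S) (y : S) : Prop := exists x, y = mul x a.

Definition local_aSa (a : S) (y : S) : Prop := exists x, y = mul (mul a x) a.

Definition idems (T : S -> Prop) (x : S) : Prop := T x /\ idempotent x.

Inductive gen (A : S -> Prop) : S -> Prop :=
| gen_base : forall x, A x -> gen A x
| gen_mul : forall x y, gen A x -> gen A y -> gen A (mul x y).

Definition Pset (a : S) (x : S) : Prop :=
  rightIdeal_Sa a x /\ greenL x (mul a x).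

End SemigroupDefs.

From Stdlib Require Import Setoid.

(* Elements of [Sa] are fixed by right multiplication by [a], so [x |-> ax]
   is multiplicative on [Sa], and [P] is closed under products because [L] is
   a right congruence.  The point is that every [x] in [P] factors as
   [x = e (ax)] with [e] an idempotent of [Sa]: if [y] is an inner inverse of
   the regular element [ax], then [e = x y a] works because [x] is a left
   multiple of [ax].  This gives the hard inclusion in (ii); for (i) it
   suffices that [x] is a left multiple of the idempotent [ax]. *)

Set Implicit Arguments.

Section Semigroup.

Variable S : Type.
Variable mul : S -> S -> S.
Hypothesis mulA : forall x y z, mul x (mul y z) = mul (mul x y) z.

Definition left_multiple (x y : S) : Prop := x = y \/ exists s, x = mul s y.

Lemma left_multiple_inner_inverse x y w :
  left_multiple x y -> mul (mul y w) y = y -> mul (mul x w) y = x.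
Proof.
  intros [-> | [s ->]] Hw; [exact Hw|].
  now rewrite <- !mulA, (mulA y w y), Hw.
Qed.

Lemma left_multiple_idempotent x y :
  left_multiple x y -> idempotent mul y -> mul x y = x.
Proof.
  intros [-> | [s ->]] Hy; [exact Hy|].
  now rewrite <- mulA, Hy.
Qed.

Lemma gen_mono (A B : S -> Prop) :
  (forall x, A x -> B x) -> forall x, gen mul A x -> gen mul B x.
Proof.
  intros AB x g; induction g; [apply gen_base | apply gen_mul]; auto.
Qed.

End Semigroup.

Section LocalSubmonoid.

Variable S : Type.
Variable mul : S -> S -> S.
Hypothesis mulA : forall x y z, mul x (mul y z) = mul (mul x y) z.
Variable a : S.
Hypothesis ha : idempotent mul a.

Let Sa := rightIdeal_Sa mul a.
Let aSa := local_aSa mul a.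
Let P := Pset mul a.

Lemma Sa_mul_a x : Sa x -> mul x a = x.
Proof. intros [y ->]. now rewrite <- mulA, ha. Qed.

Lemma Sa_mull x y : Sa y -> Sa (mul x y).
Proof. intros [z ->]. exists (mul x z). apply mulA. Qed.

Lemma aSa_Sa z : aSa z -> Sa z.
Proof. intros [u ->]. now exists (mul a u). Qed.

Lemma a_mul_aSa z : aSa z -> mul a z = z.
Proof. intros [u ->]. now rewrite !mulA, ha. Qed.

Lemma a_mul_Sa_aSa x : Sa x -> aSa (mul a x).
Proof. intros Hx. exists x. now rewrite <- mulA, Sa_mul_a. Qed.

Lemma a_mul_hom x y : Sa x -> mul a (mul x y) = mul (mul a x) (mul a y).
Proof.
  intros Hx. now rewrite (mulA (mul a x)), <- (mulA a x a), Sa_mul_a, mulA.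
Qed.

Lemma PsetP x : P x <-> Sa x /\ left_multiple mul x (mul a x).
Proof.
  split; [now intros [Hx [H _]] | intros [Hx H]].
  split; [exact Hx|]. split; [exact H|]. right. now exists a.
Qed.

Lemma Pset_mul x y : P x -> P y -> P (mul x y).
Proof.
  rewrite !PsetP. intros [_ Lx] [Hy _].
  split; [now apply Sa_mull|]. destruct Lx as [Ex | [s Ex]].
  - left. rewrite Ex at 1. symmetry. apply mulA.
  - right. exists s. rewrite Ex at 1. now rewrite !mulA.
Qed.

Lemma aSa_Pset z : aSa z -> P z.
Proof.
  intros Hz. apply PsetP. split; [now apply aSa_Sa|].
  left. now rewrite a_mul_aSa.
Qed.

Lemma Pset_Sa x : P x -> Sa x.
Proof. now intros [Hx _]. Qed.

Lemma idems_Sa_iff x : idems mul Sa x <-> P x /\ idems mul aSa (mul a x).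
Proof.
  split.
  - intros [Hx Hid]. split; [apply PsetP; split; [exact Hx|] | split].
    + right. exists x. now rewrite mulA, Sa_mul_a.
    + now apply a_mul_Sa_aSa.
    + unfold idempotent. now rewrite <- a_mul_hom, Hid.
  - rewrite PsetP. intros [[Hx Lx] [_ Hid]]. split; [exact Hx|].
    unfold idempotent. rewrite <- (Sa_mul_a Hx) at 1. rewrite <- mulA.
    now apply left_multiple_idempotent.
Qed.

Lemma gen_idems_Sa_Pset x :
  gen mul (idems mul Sa) x -> P x /\ gen mul (idems mul aSa) (mul a x).
Proof.
  intros g. induction g as [x Hx | x y _ [Px gx] _ [Py gy]].
  - apply idems_Sa_iff in Hx as [HP Hi]. split; [exact HP | now apply gen_base].
  - split; [now apply Pset_mul|].
    rewrite a_mul_hom by now apply Pset_Sa. now apply gen_mul.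
Qed.

Hypothesis hreg : forall x, aSa x -> regular mul x.

Lemma Pset_idem_factor x : P x -> exists e, idems mul Sa e /\ x = mul e (mul a x).
Proof.
  rewrite PsetP. intros [Hx Lx].
  destruct (hreg (a_mul_Sa_aSa Hx)) as [y Hy].
  assert (Hya : mul (mul (mul a x) (mul y a)) (mul a x) = mul a x).
  { now rewrite (mulA (mul a x) y a), <- mulA, (mulA a a x), ha. }
  pose proof (left_multiple_inner_inverse mulA _ Lx Hya) as Hfac.
  set (e := mul x (mul y a)) in Hfac |- *.
  assert (He : Sa e) by (unfold e; rewrite mulA; now exists (mul x y)).
  assert (Hex : mul e x = x) by now rewrite <- (Sa_mul_a He), <- mulA.
  exists e. split; [split|].
  - exact He.
  - unfold idempotent. unfold e at 2. now rewrite mulA, Hex.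
  - now rewrite Hfac.
Qed.

Lemma gen_idems_Sa_iff x :
  gen mul (idems mul Sa) x <-> P x /\ gen mul (idems mul aSa) (mul a x).
Proof.
  split; [apply gen_idems_Sa_Pset|]. intros [HP g].
  destruct (Pset_idem_factor HP) as [e [He Hx]].
  rewrite Hx. apply gen_mul; [now apply gen_base|].
  revert g. apply gen_mono. intros z [Hz Hid]. split; [now apply aSa_Sa | exact Hid].
Qed.

End LocalSubmonoid.

Theorem theorem3p13 (S : Type) (mul : S -> S -> S)
  (mulA : forall x y z, mul x (mul y z) = mul (mul x y) z)
  (a : S) (ha : idempotent mul a)
  (hreg : forall x, local_aSa mul a x -> regular mul x) :
  let P := Pset mul a in
  let phi := fun x => mul a x in
  ((forall x y, P x -> P y -> P (mul x y)) /\
   (forall x, P x -> local_aSa mul a (phi x)) /\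
   (forall x y, P x -> P y -> phi (mul x y) = mul (phi x) (phi y)) /\
   (forall z, local_aSa mul a z -> exists x, P x /\ phi x = z)) /\
  (forall x, idems mul (rightIdeal_Sa mul a) x <->
             (P x /\ idems mul (local_aSa mul a) (phi x))) /\
  (forall x, gen mul (idems mul (rightIdeal_Sa mul a)) x <->
             (P x /\ gen mul (idems mul (local_aSa mul a)) (phi x))).
Proof.
  intros P phi; subst P phi; cbv beta.
  split; [split; [|split; [|split]] | split].
  - now apply Pset_mul.
  - intros x HP. now apply a_mul_Sa_aSa, Pset_Sa.
  - intros x y HP _. now apply a_mul_hom, Pset_Sa.
  - intros z Hz. exists z. split; [now apply aSa_Pset | now apply a_mul_aSa].
  - intros x. now apply idems_Sa_iff.
  - intros x. now apply gen_idems_Sa_iff.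
Qed.
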